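(* Consider the networked SIR epidemic-opinion model described in the context, under the standing assumption stated there. If $s_i(0),x_i(0),o_i(0)\in[0,1]$ for all $i\in[n]$, then each susceptible state $s_i(t)$, $i\in[n]$, is monotonically decreasing (non-increasing) in $t\ge 0$.
   Context: There are $n$ communities. For $t\ge0$ and $i\in[n]$, $s_i(t),x_i(t),o_i(t)\in[0,1]$ denote the susceptible proportion, infected proportion and opinion (belief in the severity of the epidemic) of community $i$. The disease transmission network is a directed graph $\mathcal G=(\mathcal V,\mathcal E)$ on $n$ nodes with edge weights $\beta_{ij}>0$ if $(v_j,v_i)\in\mathcal E$ (and $\beta_{ij}=0$ otherwise); $\mathcal N_i=\{v_j:(v_j,v_i)\in\mathcal E\}$. The opinion network is a directed graph $\bar{\mathcal G}$ on the same nodes with nonnegative weights $\bar a_{ij}$ and Laplacian $\bar L=\mathrm{diag}(k_1,\dots,k_n)-\bar A$, where $[\bar A]_{ij}=\bar a_{ij}$ and $k_i=\sum_j \bar a_{ij}$. Parameters: $\beta_{\min}>0$, $\gamma_{\min}>0$, recovery rates $\gamma_i$. The model is $\dot s_i=-s_i\sum_{j\in\mathcal N_i}\big(\beta_{ij}-(\beta_{ij}-\beta_{\min})o_i\big)x_j$, $\dot x_i=s_i\sum_{j\in\mathcal N_i}\big(\beta_{ij}-(\beta_{ij}-\beta_{\min})o_i\big)x_j-\big(\gamma_{\min}+(\gamma_i-\gamma_{\min})o_i\big)x_i$, $\dot o=(\mathbf 1_n-s)-(\bar L+I_n)o$. Standing assumption: for all $i$, $s_i(0),x_i(0),o_i(0)\in[0,1]$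 with $s_i(0)+x_i(0)\le 1$ (the remainder being the recovered proportion), $\gamma_i\ge\gamma_{\min}>0$, $\beta_{ij}\ge\beta_{\min}>0$ for all $j\in\mathcal N_i$, and both $\mathcal G$ and $\bar{\mathcal G}$ are strongly connected. *)

From Stdlib Require Import Reals Lra List.
From Coquelicot Require Import Coquelicot.
Open Scope R_scope.

Definition sumR (n : nat) (f : nat -> R) : R :=
  fold_right Rplus 0 (map f (seq 0 n)).

(* directed graph on nodes 0..n-1 given by weights w : edge (v_j, v_i)
   present iff w i j > 0 *)
Inductive reach (n : nat) (w : nat -> nat -> R) : nat -> nat -> Prop :=
  | reach_refl : forall i, reach n w i i
  | reach_step : forall i j k, (j < n)%nat -> (k < n)%nat ->
      0 < w k j -> reach n w i j -> reach n w i k.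

Definition strongly_connected (n : nat) (w : nat -> nat -> R) : Prop :=
  forall i j, (i < n)%nat -> (j < n)%nat -> reach n w i j.

Definition infection (n : nat) (beta : nat -> nat -> R) (beta_min : R)
  (oi : R) (i : nat) (x : nat -> R) : R :=
  sumR n (fun j => if Rlt_dec 0 (beta i j)
                   then (beta i j - (beta i j - beta_min) * oi) * x j
                   else 0).

(* the i-th row of -(Lbar + I) o + (1 - s) *)
Definition opinion_rhs (n : nat) (abar : nat -> nat -> R) (si : R)
  (i : nat) (o : nat -> R) : R :=
  (1 - si) - (sumR n (fun j => abar i j) + 1) * o i
  + sumR n (fun j => abar i j * o j).

Definition is_solution (n : nat) (beta : nat -> nat -> R) (beta_min : R)
  (gamma : nat -> R) (gamma_min : R) (abar : nat -> nat -> R)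
  (s x o : nat -> R -> R) : Prop :=
  forall i, (i < n)%nat ->
    filterlim (s i) (at_right 0) (locally (s i 0)) /\
    filterlim (x i) (at_right 0) (locally (x i 0)) /\
    filterlim (o i) (at_right 0) (locally (o i 0)) /\
    forall t, 0 < t ->
      is_derive (s i) t
        (- s i t * infection n beta beta_min (o i t) i (fun j => x j t)) /\
      is_derive (x i) t
        (s i t * infection n beta beta_min (o i t) i (fun j => x j t)
         - (gamma_min + (gamma i - gamma_min) * o i t) * x i t) /\
      is_derive (o i) t
        (opinion_rhs n abar (s i t) i (fun j => o j t)).

From Stdlib Require Import Reals Lra Lia List.
From Coquelicot Require Import Coquelicot.
Open Scope R_scope.

(* Since s_i' = - s_i I_i, where the infection pressure I_i = sum_j c_ij x_j has
   contact rates c_ij = beta_ij - (beta_ij - beta_min) o_i that are nonnegative as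
   long as o_i <= 1, it suffices to know that s >= 0, o <= 1 and x >= 0 along the
   solution; they follow in this order.  Each is the invariance of {y <= 0} for a
   vector y (namely -s, o - 1 and -x) whose derivative satisfies, wherever y_i > 0,
   a bound y_i' <= K sum_j max(y_j, 0) on every bounded time interval.  Then the
   energy V = sum_i max(y_i, 0)^2 obeys V' <= 2 K n V and V(0+) = 0, so V = 0 by
   Gronwall. *)

(** * Finite sums *)

Lemma sumR_0 f : sumR 0 f = 0.
Proof. reflexivity. Qed.

Lemma sumR_S n f : sumR (S n) f = sumR n f + f n.
Proof.
  unfold sumR. rewrite seq_S, map_app, fold_right_app; simpl.
  generalize (f n); induction (map f (seq 0 n)) as [|a l IH]; simpl; intros; [lra|].
  rewrite IH; lra.
Qed.

Lemma sumR_ext n f g : (forall i, (i < n)%nat -> f i = g i) -> sumR n f = sumR n g.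
Proof.
  induction n as [|n IH]; intros H; [reflexivity|].
  rewrite !sumR_S, IH, H; [reflexivity | lia | intros; apply H; lia].
Qed.

Lemma sumR_le n f g : (forall i, (i < n)%nat -> f i <= g i) -> sumR n f <= sumR n g.
Proof.
  induction n as [|n IH]; intros H; [rewrite !sumR_0; lra|].
  rewrite !sumR_S. assert (f n <= g n) by (apply H; lia).
  assert (sumR n f <= sumR n g) by (apply IH; intros; apply H; lia). lra.
Qed.

Lemma sumR_plus n f g : sumR n (fun i => f i + g i) = sumR n f + sumR n g.
Proof. induction n as [|n IH]; [rewrite !sumR_0; lra|]. rewrite !sumR_S, IH; lra. Qed.

Lemma sumR_scal n c f : sumR n (fun i => c * f i) = c * sumR n f.
Proof. induction n as [|n IH]; [rewrite !sumR_0; lra|]. rewrite !sumR_S, IH; lra. Qed.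

Lemma sumR_opp n f : - sumR n f = sumR n (fun i => - f i).
Proof. induction n as [|n IH]; [rewrite !sumR_0; lra|]. rewrite !sumR_S, <- IH; lra. Qed.

Lemma sumR_const n c : sumR n (fun _ => c) = INR n * c.
Proof.
  induction n as [|n IH]; [rewrite sumR_0; simpl; lra|]. rewrite sumR_S, IH, S_INR; lra.
Qed.

Lemma sumR_nonneg n f : (forall i, (i < n)%nat -> 0 <= f i) -> 0 <= sumR n f.
Proof.
  intros H. rewrite <- (Rmult_0_r (INR n)), <- sumR_const. now apply sumR_le.
Qed.

Lemma sumR_term_le n f i :
  (forall j, (j < n)%nat -> 0 <= f j) -> (i < n)%nat -> f i <= sumR n f.
Proof.
  induction n as [|n IH]; intros H Hi; [lia|]. rewrite sumR_S.
  assert (0 <= f n) by (apply H; lia).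
  destruct (Nat.eq_dec i n) as [->|Hin].
  - assert (0 <= sumR n f) by (apply sumR_nonneg; intros; apply H; lia). lra.
  - assert (f i <= sumR n f) by (apply IH; [intros; apply H|]; lia). lra.
Qed.

Lemma Rabs_sumR_le n f M :
  (forall i, (i < n)%nat -> Rabs (f i) <= M) -> Rabs (sumR n f) <= INR n * M.
Proof.
  induction n as [|n IH]; intros H; [rewrite sumR_0, Rabs_R0; simpl; lra|].
  rewrite sumR_S, S_INR. eapply Rle_trans; [apply Rabs_triang|].
  assert (Rabs (f n) <= M) by (apply H; lia).
  assert (Rabs (sumR n f) <= INR n * M) by (apply IH; intros; apply H; lia). lra.
Qed.

Lemma Rsqr_sumR_le n u : Rsqr (sumR n u) <= INR n * sumR n (fun i => Rsqr (u i)).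
Proof.
  set (Q := sumR n (fun i => Rsqr (u i))).
  assert (Hi : forall i, 2 * u i * sumR n u <= INR n * Rsqr (u i) + Q).
  { intros i.
    replace (2 * u i * sumR n u) with (sumR n (fun j => 2 * (u i * u j)))
      by (rewrite !sumR_scal; ring).
    replace (INR n * Rsqr (u i) + Q) with (sumR n (fun j => Rsqr (u i) + Rsqr (u j)))
      by (rewrite sumR_plus, sumR_const; reflexivity).
    apply sumR_le; intros j _. pose proof (Rle_0_sqr (u i - u j)).
    unfold Rsqr in *. lra. }
  assert (H : sumR n (fun i => 2 * sumR n u * u i)
              <= sumR n (fun i => INR n * Rsqr (u i) + Q)).
  { apply sumR_le; intros i _. specialize (Hi i). lra. }
  rewrite sumR_scal, sumR_plus, sumR_scal, sumR_const in H. fold Q in H.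
  unfold Rsqr in *. lra.
Qed.

Lemma is_derive_sumR n (F : nat -> R -> R) dF t :
  (forall i, (i < n)%nat -> is_derive (F i) t (dF i)) ->
  is_derive (fun u => sumR n (fun i => F i u)) t (sumR n dF).
Proof.
  induction n as [|n IH]; intros H.
  - rewrite sumR_0. apply is_derive_ext with (fun _ => 0); [reflexivity|].
    apply (is_derive_const (V := R_NormedModule)).
  - rewrite sumR_S.
    apply is_derive_ext with (fun u => plus (sumR n (fun i => F i u)) (F n u)).
    + intros u. now rewrite sumR_S.
    + apply (is_derive_plus (V := R_NormedModule)); [apply IH; intros|]; apply H; lia.
Qed.

Lemma filterlim_sumR {T} (F : (T -> Prop) -> Prop) {FF : Filter F}
  n (G : nat -> T -> R) (l : nat -> R) :
  (forall i, (i < n)%nat -> filterlim (G i) F (locally (l i))) ->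
  filterlim (fun u => sumR n (fun i => G i u)) F (locally (sumR n l)).
Proof.
  induction n as [|n IH]; intros H.
  - rewrite sumR_0. apply filterlim_const.
  - rewrite sumR_S.
    apply filterlim_ext with (fun u => plus (sumR n (fun i => G i u)) (G n u)).
    + intros u. now rewrite sumR_S.
    + eapply filterlim_comp_2; [apply IH; intros; apply H; lia | apply H; lia |].
      apply (filterlim_plus (V := R_NormedModule)).
Qed.

Lemma le_sumR_pos_part n (v : nat -> R) i :
  (i < n)%nat -> v i <= sumR n (fun j => Rmax (v j) 0).
Proof.
  intros Hi. apply Rle_trans with (Rmax (v i) 0); [apply Rmax_l|].
  apply (sumR_term_le n (fun j => Rmax (v j) 0)); [|exact Hi].
  intros j _. apply Rmax_r.
Qed.

Lemma sumR_mul_le_pos_part n (c v : nat -> R) K :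
  (forall j, (j < n)%nat -> 0 <= c j <= K) ->
  sumR n (fun j => c j * v j) <= K * sumR n (fun j => Rmax (v j) 0).
Proof.
  intros Hc. rewrite <- sumR_scal. apply sumR_le. intros j Hj.
  specialize (Hc j Hj). pose proof (Rmax_l (v j) 0). pose proof (Rmax_r (v j) 0).
  apply Rle_trans with (c j * Rmax (v j) 0);
    [apply Rmult_le_compat_l | apply Rmult_le_compat_r]; lra.
Qed.

(** * Real functions on a half-line *)

Lemma filterlim_derivable_comp {T} (F : (T -> Prop) -> Prop) {FF : Filter F}
  (g : R -> R) (f : T -> R) l :
  ex_derive g l -> filterlim f F (locally l) ->
  filterlim (fun u => g (f u)) F (locally (g l)).
Proof.
  intros Hg Hf. eapply filterlim_comp; [exact Hf|].
  exact (ex_derive_continuous (K := R_AbsRing) (V := R_NormedModule) g l Hg).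
Qed.

Lemma is_derive_sub_const (f : R -> R) t l c :
  is_derive f t l -> is_derive (fun u => f u - c) t l.
Proof.
  intros H. apply is_derive_ext with (fun u => minus (f u) c); [reflexivity|].
  replace l with (minus l 0) by (unfold minus, plus, opp; simpl; ring).
  apply (is_derive_minus (V := R_NormedModule)); [exact H|].
  apply (is_derive_const (V := R_NormedModule)).
Qed.

Definition sqr_pos_part (y : R) : R := Rsqr (Rmax y 0).

Lemma sqr_pos_part_nonneg y : 0 <= sqr_pos_part y.
Proof. apply Rle_0_sqr. Qed.

Lemma sqr_pos_part_nonpos y : y <= 0 -> sqr_pos_part y = 0.
Proof. intros Hy. unfold sqr_pos_part. rewrite Rmax_right by lra. apply Rsqr_0. Qed.

Lemma nonpos_of_sqr_pos_part y : sqr_pos_part y <= 0 -> y <= 0.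
Proof.
  unfold sqr_pos_part, Rsqr. intros H. destruct (Rle_dec y 0) as [Hy|Hy]; [exact Hy|].
  rewrite Rmax_left in H by lra. nra.
Qed.

Lemma is_derive_sqr_pos_part y : is_derive sqr_pos_part y (2 * Rmax y 0).
Proof.
  destruct (Rtotal_order y 0) as [Hy|[->|Hy]].
  - rewrite Rmax_right, Rmult_0_r by lra.
    apply is_derive_ext_loc with (fun _ => 0).
    + assert (Hp : 0 < - y) by lra. exists (mkposreal _ Hp). intros z Hz.
      change (Rabs (z - y) < - y) in Hz. apply Rabs_def2 in Hz.
      symmetry. apply sqr_pos_part_nonpos. lra.
    + apply (is_derive_const (V := R_NormedModule)).
  - (* at the kink the difference quotient is bounded by [|h|] *)
    rewrite Rmax_right, Rmult_0_r by lra.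
    apply is_derive_Reals. intros eps Heps. exists (mkposreal eps Heps).
    intros h Hh Hlt. simpl in Hlt. unfold sqr_pos_part, Rsqr.
    rewrite Rplus_0_l, (Rmax_right 0 0) by lra.
    destruct (Rle_dec h 0).
    + rewrite Rmax_right by lra.
      replace ((0 * 0 - 0 * 0) / h - 0) with 0 by (field; auto).
      rewrite Rabs_R0; lra.
    + rewrite Rmax_left by lra.
      replace ((h * h - 0 * 0) / h - 0) with h by (field; auto). exact Hlt.
  - rewrite Rmax_left by lra.
    apply is_derive_ext_loc with (fun z => z * z).
    + exists (mkposreal _ Hy). intros z Hz.
      change (Rabs (z - y) < y) in Hz. apply Rabs_def2 in Hz.
      unfold sqr_pos_part, Rsqr. rewrite Rmax_left by lra. reflexivity.
    + auto_derive; [auto | ring].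
Qed.

Lemma is_derive_sqr_pos_part_comp f t l : is_derive f t l ->
  is_derive (fun u => sqr_pos_part (f u)) t (2 * Rmax (f t) 0 * l).
Proof.
  intros H. replace (2 * Rmax (f t) 0 * l) with (scal l (2 * Rmax (f t) 0)).
  - apply (is_derive_comp (V := R_NormedModule)); [apply is_derive_sqr_pos_part | exact H].
  - change (l * (2 * Rmax (f t) 0) = 2 * Rmax (f t) 0 * l). ring.
Qed.

Lemma pos_part_mul_le y d B : (0 < y -> d <= B) -> Rmax y 0 * d <= Rmax y 0 * B.
Proof.
  intros H. destruct (Rle_dec y 0) as [Hy|Hy].
  - rewrite Rmax_right by lra. lra.
  - rewrite Rmax_left by lra. apply Rmult_le_compat_l; [|apply H]; lra.
Qed.

Lemma nonincreasing_of_derive_nonpos (f df : R -> R) a b : a <= b ->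
  (forall t, a <= t <= b -> is_derive f t (df t)) ->
  (forall t, a <= t <= b -> df t <= 0) -> f b <= f a.
Proof.
  intros Hab Hd Hneg. destruct (Req_dec a b) as [<-|Hne]; [lra|].
  destruct (MVT_cor2 f df a b) as [c [Hc Hcab]]; [lra | |].
  - intros c Hc. apply is_derive_Reals, Hd. exact Hc.
  - assert (df c * (b - a) <= 0) by (apply Rmult_le_0_r; [apply Hneg |]; lra). lra.
Qed.

Lemma at_right_0_interval T : 0 < T -> at_right 0 (fun t => 0 < t <= T).
Proof.
  intros HT. exists (mkposreal T HT). intros t Ht Hpos.
  change (Rabs (t - 0) < T) in Ht. rewrite Rminus_0_r, Rabs_pos_eq in Ht; lra.
Qed.

Lemma le_lim_at_right_0 (f : R -> R) c l T : 0 < T ->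
  (forall t, 0 < t <= T -> c <= f t) -> filterlim f (at_right 0) (locally l) -> c <= l.
Proof.
  intros HT Hc Hl. apply Rnot_lt_le. intros Hlt.
  assert (Hball := proj1 (filterlim_locally f l) Hl (mkposreal (c - l) ltac:(lra))).
  destruct (filter_ex _ (filter_and _ _ (at_right_0_interval T HT) Hball)) as [t [Ht Hft]].
  change (Rabs (f t - l) < c - l) in Hft. apply Rabs_def2 in Hft.
  specialize (Hc t Ht). lra.
Qed.

Lemma nonincreasing_of_right_cont (f df : R -> R) :
  filterlim f (at_right 0) (locally (f 0)) ->
  (forall t, 0 < t -> is_derive f t (df t)) -> (forall t, 0 < t -> df t <= 0) ->
  forall t1 t2, 0 <= t1 -> t1 <= t2 -> f t2 <= f t1.
Proof.
  intros Hcont Hd Hneg.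
  assert (Hpos : forall a b, 0 < a -> a <= b -> f b <= f a).
  { intros a b Ha Hab. apply (nonincreasing_of_derive_nonpos f df); [exact Hab | |];
      intros t Ht; [apply Hd | apply Hneg]; lra. }
  intros t1 t2 Ht1 Ht12. destruct (Req_dec t1 0) as [->|Ht10]; [|apply Hpos; lra].
  destruct (Req_dec t2 0) as [->|Ht20]; [lra|].
  apply (le_lim_at_right_0 f (f t2) (f 0) t2); [lra | | exact Hcont].
  intros a Ha. apply Hpos; lra.
Qed.

Lemma gronwall_nonpos (V dV : R -> R) K T : 0 <= K -> 0 < T ->
  (forall t, 0 < t <= T -> is_derive V t (dV t)) ->
  (forall t, 0 < t <= T -> dV t <= K * V t) ->
  (forall t, 0 < t <= T -> 0 <= V t) ->
  filterlim V (at_right 0) (locally 0) -> V T <= 0.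
Proof.
  intros HK HT Hd Hle Hpos Hlim.
  set (W := fun t => V t * exp (- K * t)).
  assert (HW : forall a, 0 < a <= T -> W T <= W a).
  { intros a Ha.
    apply (nonincreasing_of_derive_nonpos W
             (fun t => (dV t - K * V t) * exp (- K * t))); [lra | |].
    - intros t Ht. unfold W.
      replace ((dV t - K * V t) * exp (- K * t))
        with (plus (mult (dV t) (exp (- K * t))) (mult (V t) (- K * exp (- K * t))))
        by (unfold plus, mult; simpl; ring).
      apply (is_derive_mult V (fun t => exp (- K * t))); [apply Hd; lra | | apply Rmult_comm].
      auto_derive; [auto | ring].
    - intros t Ht. pose proof (Hle t ltac:(lra)). pose proof (exp_pos (- K * t)). nra. }
  assert (HWT : W T <= 0).
  { apply (le_lim_at_right_0 V (W T) 0 T HT); [|exact Hlim].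
    intros a Ha. apply Rle_trans with (W a); [apply HW; exact Ha|].
    assert (exp (- K * a) <= 1).
    { rewrite <- exp_0. destruct (Req_dec (- K * a) 0) as [->|Hne]; [lra|].
      left. apply exp_increasing. nra. }
    pose proof (Hpos a Ha). unfold W. nra. }
  pose proof (exp_pos (- K * T)). unfold W in HWT. nra.
Qed.

(* [Rbar_locally p_infty P] says that [P M] holds for every large enough [M];
   finitely many such bounds are combined with [filter_and]. *)
Lemma eventually_ge_abs c : Rbar_locally p_infty (fun M => Rabs c <= M).
Proof. exists (Rabs c). intros; lra. Qed.

Lemma filter_forall_lt {T} (F : (T -> Prop) -> Prop) {FF : Filter F} n
  (P : nat -> T -> Prop) :
  (forall i, (i < n)%nat -> F (P i)) -> F (fun u => forall i, (i < n)%nat -> P i u).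
Proof.
  induction n as [|n IH]; intros H.
  - apply filter_forall. intros; lia.
  - apply filter_imp with (fun u => (forall i, (i < n)%nat -> P i u) /\ P n u).
    + intros u [Hlt Hn] i Hi. destruct (Nat.eq_dec i n) as [->|Hin]; [exact Hn|].
      apply Hlt. lia.
    + apply filter_and; [apply IH; intros; apply H|apply H]; lia.
Qed.

Lemma eventually_bounded_on (f : R -> R) T :
  filterlim f (at_right 0) (locally (f 0)) -> (forall t, 0 < t -> ex_derive f t) ->
  Rbar_locally p_infty (fun M => forall t, 0 <= t <= T -> Rabs (f t) <= M).
Proof.
  intros Hl Hd.
  destruct (proj1 (filterlim_locally f (f 0)) Hl (mkposreal 1 Rlt_0_1)) as [d Hnear].
  assert (Hd2 : 0 < d / 2) by (pose proof (cond_pos d); lra).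
  set (b := Rmax T (d / 2)). assert (Hb : d / 2 <= b) by apply Rmax_r.
  assert (Hcont : forall c, d / 2 <= c <= b -> continuity_pt f c).
  { intros c Hc. apply continuity_pt_filterlim.
    apply (ex_derive_continuous (K := R_AbsRing) (V := R_NormedModule)), Hd. lra. }
  destruct (continuity_ab_maj f (d / 2) b Hb Hcont) as [tmax [Hmax _]].
  destruct (continuity_ab_min f (d / 2) b Hb Hcont) as [tmin [Hmin _]].
  apply filter_imp with
    (fun M => Rabs (f 0) + 1 <= M /\ Rabs (f tmax) <= M /\ Rabs (f tmin) <= M).
  - intros M (H0 & Htmax & Htmin) t Ht. destruct (Rlt_dec t d) as [Htd|Htd].
    + destruct (Req_dec t 0) as [->|Ht0]; [lra|].
      assert (Hft : Rabs (f t - f 0) < 1).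
      { apply (Hnear t); [|lra]. change (Rabs (t - 0) < d).
        rewrite Rminus_0_r, Rabs_pos_eq; lra. }
      pose proof (Rabs_triang_inv (f t) (f 0)). lra.
    + assert (Htb : t <= b) by (pose proof (Rmax_l T (d / 2)); unfold b; lra).
      specialize (Hmax t ltac:(lra)). specialize (Hmin t ltac:(lra)).
      pose proof (Rle_abs (f tmax)). pose proof (Rabs_maj2 (f tmin)).
      apply Rabs_le. lra.
  - repeat apply filter_and; [exists (Rabs (f 0) + 1); intros; lra | |];
      apply eventually_ge_abs.
Qed.

(** * Invariance of the nonpositive orthant *)

Definition pos_energy (n : nat) (v : nat -> R) : R := sumR n (fun i => sqr_pos_part (v i)).

Lemma pos_energy_nonneg n v : 0 <= pos_energy n v.
Proof. apply sumR_nonneg. intros i _. apply sqr_pos_part_nonneg. Qed.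

Lemma pos_energy_nonpos n v : (forall i, (i < n)%nat -> v i <= 0) -> pos_energy n v = 0.
Proof.
  intros Hv. unfold pos_energy. rewrite (sumR_ext n _ (fun _ => 0)).
  - rewrite sumR_const. ring.
  - intros i Hi. now apply sqr_pos_part_nonpos, Hv.
Qed.

Lemma nonpos_of_pos_energy n v i : (i < n)%nat -> pos_energy n v <= 0 -> v i <= 0.
Proof.
  intros Hi HV. apply nonpos_of_sqr_pos_part, Rle_trans with (pos_energy n v); [|exact HV].
  apply (sumR_term_le n (fun j => sqr_pos_part (v j))); [|exact Hi].
  intros j _. apply sqr_pos_part_nonneg.
Qed.

Lemma pos_energy_derive_le n (v d : nat -> R) K : 0 <= K ->
  (forall i, (i < n)%nat -> 0 < v i -> d i <= K * sumR n (fun j => Rmax (v j) 0)) ->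
  sumR n (fun i => 2 * Rmax (v i) 0 * d i) <= 2 * K * INR n * pos_energy n v.
Proof.
  intros HK Hd. set (U := sumR n (fun j => Rmax (v j) 0)).
  apply Rle_trans with (sumR n (fun i => (2 * K * U) * Rmax (v i) 0)).
  - apply sumR_le. intros i Hi.
    pose proof (pos_part_mul_le (v i) (d i) (K * U) (Hd i Hi)). lra.
  - rewrite sumR_scal. fold U.
    pose proof (Rsqr_sumR_le n (fun j => Rmax (v j) 0)) as Hsq. fold U in Hsq.
    unfold pos_energy, sqr_pos_part. apply (Rmult_le_compat_l (2 * K)) in Hsq; [|lra].
    unfold Rsqr in Hsq at 1. lra.
Qed.

Section NonposInvariance.

Variables (n : nat) (y dy : nat -> R -> R).

Hypothesis y_right_cont :
  forall i, (i < n)%nat -> filterlim (y i) (at_right 0) (locally (y i 0)).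
Hypothesis y_init : forall i, (i < n)%nat -> y i 0 <= 0.
Hypothesis y_derive :
  forall i, (i < n)%nat -> forall t, 0 < t -> is_derive (y i) t (dy i t).
Hypothesis dy_bound : forall T, exists K, 0 <= K /\
  forall i t, (i < n)%nat -> 0 < t <= T -> 0 < y i t ->
    dy i t <= K * sumR n (fun j => Rmax (y j t) 0).

Theorem nonpos_invariant : forall i, (i < n)%nat -> forall t, 0 <= t -> y i t <= 0.
Proof.
  intros i Hi t Ht. destruct (Req_dec t 0) as [->|Ht0]; [now apply y_init|].
  destruct (dy_bound t) as [K [HK Hbound]].
  set (V := fun u => pos_energy n (fun j => y j u)).
  apply (nonpos_of_pos_energy n (fun j => y j t) i Hi).
  apply (gronwall_nonpos V (fun u => sumR n (fun j => 2 * Rmax (y j u) 0 * dy j u))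
           (2 * K * INR n) t).
  - pose proof (pos_INR n). nra.
  - lra.
  - intros u Hu. apply is_derive_sumR. intros j Hj.
    apply is_derive_sqr_pos_part_comp, y_derive; [exact Hj | lra].
  - intros u Hu. apply pos_energy_derive_le; [exact HK|].
    intros j Hj. now apply Hbound.
  - intros u _. apply pos_energy_nonneg.
  - rewrite <- (pos_energy_nonpos n (fun j => y j 0)) at 2 by exact y_init.
    apply (filterlim_sumR (at_right 0)). intros j Hj.
    apply (filterlim_derivable_comp (at_right 0)).
    + eexists. apply is_derive_sqr_pos_part.
    + now apply y_right_cont.
Qed.

End NonposInvariance.

(** * The epidemic-opinion model *)

Lemma Rabs_affine_le a b o M : Rabs a <= M -> Rabs b <= M -> Rabs o <= M ->
  Rabs (a + (b - a) * o) <= M + 2 * M * M.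
Proof.
  intros Ha Hb Ho. eapply Rle_trans; [apply Rabs_triang|]. rewrite Rabs_mult.
  assert (Rabs (b - a) <= 2 * M).
  { unfold Rminus. eapply Rle_trans; [apply Rabs_triang|]. rewrite Rabs_Ropp. lra. }
  assert (Rabs (b - a) * Rabs o <= 2 * M * M) by (apply Rmult_le_compat; auto using Rabs_pos).
  lra.
Qed.

Definition contact_rate (b bmin o : R) : R :=
  if Rlt_dec 0 b then b - (b - bmin) * o else 0.

Lemma infection_contact_rate n beta bmin oi i x :
  infection n beta bmin oi i x = sumR n (fun j => contact_rate (beta i j) bmin oi * x j).
Proof.
  apply sumR_ext. intros j _. unfold contact_rate. destruct (Rlt_dec 0 (beta i j)); ring.
Qed.

Lemma contact_rate_nonneg b bmin o : 0 <= bmin -> (0 < b -> bmin <= b) -> o <= 1 ->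
  0 <= contact_rate b bmin o.
Proof.
  intros Hbmin Hb Ho. unfold contact_rate. destruct (Rlt_dec 0 b) as [Hpos|]; [|lra].
  specialize (Hb Hpos). assert (0 <= (b - bmin) * (1 - o)) by (apply Rmult_le_pos; lra).
  lra.
Qed.

Lemma Rabs_contact_rate_le b bmin o M : Rabs b <= M -> Rabs bmin <= M -> Rabs o <= M ->
  Rabs (contact_rate b bmin o) <= M + 2 * M * M.
Proof.
  intros Hb Hbmin Ho. unfold contact_rate. destruct (Rlt_dec 0 b).
  - replace (b - (b - bmin) * o) with (b + (bmin - b) * o) by ring.
    now apply Rabs_affine_le.
  - pose proof (Rabs_pos b). rewrite Rabs_R0. nra.
Qed.

Lemma infection_nonneg n beta bmin oi i x : 0 <= bmin ->
  (forall j, (j < n)%nat -> 0 < beta i j -> bmin <= beta i j) -> oi <= 1 ->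
  (forall j, (j < n)%nat -> 0 <= x j) -> 0 <= infection n beta bmin oi i x.
Proof.
  intros Hbmin Hb Ho Hx. rewrite infection_contact_rate. apply sumR_nonneg.
  intros j Hj. apply Rmult_le_pos; [apply contact_rate_nonneg|]; auto.
Qed.

Lemma Rabs_infection_le n beta bmin oi i x K :
  (forall j, (j < n)%nat -> Rabs (contact_rate (beta i j) bmin oi) <= K /\ Rabs (x j) <= K) ->
  Rabs (infection n beta bmin oi i x) <= INR n * (K * K).
Proof.
  intros H. rewrite infection_contact_rate. apply Rabs_sumR_le. intros j Hj.
  destruct (H j Hj) as [Hc Hx]. rewrite Rabs_mult.
  apply Rmult_le_compat; auto using Rabs_pos.
Qed.

Lemma opp_infection_le n beta bmin oi i x K :
  (forall j, (j < n)%nat -> 0 <= contact_rate (beta i j) bmin oi <= K) ->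
  - infection n beta bmin oi i x <= K * sumR n (fun j => Rmax (- x j) 0).
Proof.
  intros H. rewrite infection_contact_rate.
  replace (- sumR n _) with (sumR n (fun j => contact_rate (beta i j) bmin oi * - x j)).
  - now apply sumR_mul_le_pos_part.
  - rewrite sumR_opp. apply sumR_ext. intros; ring.
Qed.

Lemma opinion_rhs_shift n abar si i o :
  opinion_rhs n abar si i o
  = - si - (sumR n (fun j => abar i j) + 1) * (o i - 1)
    + sumR n (fun j => abar i j * (o j - 1)).
Proof.
  unfold opinion_rhs.
  replace (sumR n (fun j => abar i j * (o j - 1)))
    with (sumR n (fun j => abar i j * o j) + -1 * sumR n (fun j => abar i j))
    by (rewrite <- sumR_scal, <- sumR_plus; apply sumR_ext; intros; ring).
  ring.
Qed.

Section Solution.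

Context {n : nat} {beta : nat -> nat -> R} {bmin : R} {gamma : nat -> R} {gmin : R}
  {abar : nat -> nat -> R} {s x o : nat -> R -> R}.

Hypothesis solution : is_solution n beta bmin gamma gmin abar s x o.

Lemma solution_derive (i : nat) (t : R) : (i < n)%nat -> 0 < t ->
  is_derive (s i) t (- s i t * infection n beta bmin (o i t) i (fun j => x j t)) /\
  is_derive (x i) t (s i t * infection n beta bmin (o i t) i (fun j => x j t)
                     - (gmin + (gamma i - gmin) * o i t) * x i t) /\
  is_derive (o i) t (opinion_rhs n abar (s i t) i (fun j => o j t)).
Proof. intros Hi. now apply solution. Qed.

Lemma solution_rates_bounded T : exists K, 0 <= K /\
  forall i j t, (i < n)%nat -> (j < n)%nat -> 0 < t <= T ->
    Rabs (s i t) <= K /\ Rabs (x i t) <= K /\ Rabs (abar i j) <= K /\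
    Rabs (contact_rate (beta i j) bmin (o i t)) <= K /\
    Rabs (gmin + (gamma i - gmin) * o i t) <= K.
Proof.
  assert (HM : Rbar_locally p_infty (fun M => Rabs bmin <= M /\ Rabs gmin <= M /\
    forall i, (i < n)%nat -> Rabs (gamma i) <= M /\
      (forall j, (j < n)%nat -> Rabs (beta i j) <= M /\ Rabs (abar i j) <= M) /\
      forall t, 0 <= t <= T -> Rabs (s i t) <= M /\ Rabs (x i t) <= M /\ Rabs (o i t) <= M)).
  { apply filter_and; [apply eventually_ge_abs|].
    apply filter_and; [apply eventually_ge_abs|].
    apply (filter_forall_lt (Rbar_locally p_infty)). intros i Hi.
    destruct (solution i Hi) as (Hs & Hx & Ho & _).
    apply filter_and; [apply eventually_ge_abs|].
    apply filter_and.
    - apply (filter_forall_lt (Rbar_locally p_infty)). intros j _.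
      apply filter_and; apply eventually_ge_abs.
    - apply filter_imp with (fun M =>
        (forall t, 0 <= t <= T -> Rabs (s i t) <= M) /\
        (forall t, 0 <= t <= T -> Rabs (x i t) <= M) /\
        (forall t, 0 <= t <= T -> Rabs (o i t) <= M)).
      + intros M (H1 & H2 & H3) t Ht. auto.
      + repeat apply filter_and; apply eventually_bounded_on; auto;
          intros t Ht; eexists; apply (solution_derive i t Hi Ht). }
  destruct (filter_ex _ HM) as [M (Hbmin & Hgmin & Hall)].
  assert (HM0 : 0 <= M) by (pose proof (Rabs_pos bmin); lra).
  assert (HMK : M <= M + 2 * M * M) by nra.
  exists (M + 2 * M * M). split; [nra|]. intros i j t Hi Hj Ht.
  destruct (Hall i Hi) as (Hgamma & Hrow & Hstate).
  destruct (Hrow j Hj) as [Hbeta Habar]. destruct (Hstate t ltac:(lra)) as (Hs & Hx & Ho).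
  repeat split; try lra.
  - now apply Rabs_contact_rate_le.
  - now apply Rabs_affine_le.
Qed.

Lemma susceptible_nonneg : (forall i, (i < n)%nat -> 0 <= s i 0) ->
  forall i, (i < n)%nat -> forall t, 0 <= t -> 0 <= s i t.
Proof.
  intros Hs0 i Hi t Ht. apply Ropp_le_cancel. rewrite Ropp_0. revert i Hi t Ht.
  apply (nonpos_invariant n (fun i t => - s i t)
    (fun i t => - (- s i t * infection n beta bmin (o i t) i (fun j => x j t)))).
  - intros i Hi. apply (filterlim_derivable_comp (at_right 0) Ropp); [auto_derive; auto|].
    apply (solution i Hi).
  - intros i Hi. specialize (Hs0 i Hi). lra.
  - intros i Hi t Ht. apply (is_derive_opp (V := R_NormedModule)).
    apply (solution_derive i t Hi Ht).
  - intros T. destruct (solution_rates_bounded T) as [K [HK Hbound]].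
    exists (INR n * (K * K)). split; [pose proof (pos_INR n); nra|].
    intros i t Hi Ht Hneg.
    set (I := infection n beta bmin (o i t) i (fun j => x j t)).
    assert (HI : Rabs I <= INR n * (K * K)).
    { apply Rabs_infection_le. intros j Hj. split.
      - apply (Hbound i j t Hi Hj Ht).
      - apply (Hbound j j t Hj Hj Ht). }
    apply Rle_trans with (- s i t * (INR n * (K * K))).
    + replace (- (- s i t * I)) with (- s i t * - I) by ring.
      apply Rmult_le_compat_l; [lra|].
      pose proof (Rle_abs (- I)) as HabsI. rewrite Rabs_Ropp in HabsI. lra.
    + rewrite Rmult_comm. apply Rmult_le_compat_l; [pose proof (pos_INR n); nra|].
      exact (le_sumR_pos_part n (fun j => - s j t) i Hi).
Qed.

Lemma opinion_le_one : (forall i j, (i < n)%nat -> (j < n)%nat -> 0 <= abar i j) ->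
  (forall i, (i < n)%nat -> o i 0 <= 1) ->
  (forall i, (i < n)%nat -> forall t, 0 <= t -> 0 <= s i t) ->
  forall i, (i < n)%nat -> forall t, 0 <= t -> o i t <= 1.
Proof.
  intros Habar Ho0 Hs i Hi t Ht. cut (o i t - 1 <= 0); [lra|]. revert i Hi t Ht.
  apply (nonpos_invariant n (fun i t => o i t - 1)
    (fun i t => opinion_rhs n abar (s i t) i (fun j => o j t))).
  - intros i Hi. apply (filterlim_derivable_comp (at_right 0) (fun v => v - 1));
      [auto_derive; auto|].
    apply (solution i Hi).
  - intros i Hi. specialize (Ho0 i Hi). lra.
  - intros i Hi t Ht. apply is_derive_sub_const, (solution_derive i t Hi Ht).
  - intros T. destruct (solution_rates_bounded T) as [K [HK Hbound]].
    exists K. split; [exact HK|]. intros i t Hi Ht Hpos.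
    rewrite opinion_rhs_shift.
    assert (Hk : 0 <= sumR n (fun j => abar i j)) by (apply sumR_nonneg; auto).
    assert (0 <= (sumR n (fun j => abar i j) + 1) * (o i t - 1))
      by (apply Rmult_le_pos; lra).
    assert (sumR n (fun j => abar i j * (o j t - 1))
            <= K * sumR n (fun j => Rmax (o j t - 1) 0)).
    { apply sumR_mul_le_pos_part. intros j Hj. split; [auto|].
      destruct (Hbound i j t Hi Hj Ht) as (_ & _ & Ha & _).
      pose proof (Rle_abs (abar i j)). lra. }
    pose proof (Hs i Hi t ltac:(lra)). lra.
Qed.

Lemma infected_nonneg : 0 <= bmin ->
  (forall i j, (i < n)%nat -> (j < n)%nat -> 0 < beta i j -> bmin <= beta i j) ->
  (forall i, (i < n)%nat -> 0 <= x i 0) ->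
  (forall i, (i < n)%nat -> forall t, 0 <= t -> 0 <= s i t) ->
  (forall i, (i < n)%nat -> forall t, 0 <= t -> o i t <= 1) ->
  forall i, (i < n)%nat -> forall t, 0 <= t -> 0 <= x i t.
Proof.
  intros Hbmin Hbeta Hx0 Hs Ho i Hi t Ht. apply Ropp_le_cancel. rewrite Ropp_0.
  revert i Hi t Ht.
  apply (nonpos_invariant n (fun i t => - x i t)
    (fun i t => - (s i t * infection n beta bmin (o i t) i (fun j => x j t)
                   - (gmin + (gamma i - gmin) * o i t) * x i t))).
  - intros i Hi. apply (filterlim_derivable_comp (at_right 0) Ropp); [auto_derive; auto|].
    apply (solution i Hi).
  - intros i Hi. specialize (Hx0 i Hi). lra.
  - intros i Hi t Ht. apply (is_derive_opp (V := R_NormedModule)).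
    apply (solution_derive i t Hi Ht).
  - intros T. destruct (solution_rates_bounded T) as [K [HK Hbound]].
    exists (K * K + K). split; [nra|]. intros i t Hi Ht Hneg.
    set (U := sumR n (fun j => Rmax (- x j t) 0)).
    assert (HU : 0 <= U) by (apply sumR_nonneg; intros; apply Rmax_r).
    assert (HI : - infection n beta bmin (o i t) i (fun j => x j t) <= K * U).
    { apply opp_infection_le. intros j Hj.
      destruct (Hbound i j t Hi Hj Ht) as (_ & _ & _ & Hc & _).
      pose proof (Rle_abs (contact_rate (beta i j) bmin (o i t))).
      split; [|lra].
      apply contact_rate_nonneg; [exact Hbmin | now apply Hbeta | apply Ho; [exact Hi | lra]]. }
    destruct (Hbound i i t Hi Hi Ht) as (Hsi & _ & _ & _ & Hg).
    pose proof (Hs i Hi t ltac:(lra)) as Hsi0. rewrite Rabs_pos_eq in Hsi by exact Hsi0.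
    pose proof (le_sumR_pos_part n (fun j => - x j t) i Hi) as HxU.
    cbv beta in HxU. fold U in HxU.
    set (g := gmin + (gamma i - gmin) * o i t) in *.
    assert (Hinf : s i t * - infection n beta bmin (o i t) i (fun j => x j t) <= K * (K * U)).
    { apply Rle_trans with (s i t * (K * U)); [now apply Rmult_le_compat_l|].
      apply Rmult_le_compat_r; [nra | exact Hsi]. }
    assert (Hrec : g * x i t <= K * U).
    { replace (g * x i t) with (- g * - x i t) by ring.
      apply Rle_trans with (K * - x i t); [|apply Rmult_le_compat_l; lra].
      apply Rmult_le_compat_r; [lra|].
      pose proof (Rle_abs (- g)) as Habs. rewrite Rabs_Ropp in Habs. lra. }
    lra.
Qed.

End Solution.

Theorem lemma2 (n : nat) (beta : nat -> nat -> R) (beta_min : R)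
  (gamma : nat -> R) (gamma_min : R) (abar : nat -> nat -> R)
  (s x o : nat -> R -> R) :
  0 < beta_min -> 0 < gamma_min ->
  (forall i, (i < n)%nat -> gamma_min <= gamma i) ->
  (forall i j, (i < n)%nat -> (j < n)%nat -> 0 <= beta i j) ->
  (forall i j, (i < n)%nat -> (j < n)%nat -> 0 < beta i j -> beta_min <= beta i j) ->
  (forall i j, (i < n)%nat -> (j < n)%nat -> 0 <= abar i j) ->
  strongly_connected n beta ->
  strongly_connected n abar ->
  (forall i, (i < n)%nat ->
     0 <= s i 0 <= 1 /\ 0 <= x i 0 <= 1 /\ 0 <= o i 0 <= 1 /\
     s i 0 + x i 0 <= 1) ->
  is_solution n beta beta_min gamma gamma_min abar s x o ->
  forall i, (i < n)%nat ->
    forall t1 t2, 0 <= t1 -> t1 <= t2 -> s i t2 <= s i t1.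
Proof.
  intros Hbmin _ _ _ Hbeta Habar _ _ Hinit Hsol i Hi.
  assert (Hs : forall j, (j < n)%nat -> forall t, 0 <= t -> 0 <= s j t)
    by (apply (susceptible_nonneg Hsol); intros j Hj; apply Hinit, Hj).
  assert (Ho : forall j, (j < n)%nat -> forall t, 0 <= t -> o j t <= 1)
    by (apply (opinion_le_one Hsol Habar); [intros j Hj; apply Hinit, Hj | exact Hs]).
  assert (Hx : forall j, (j < n)%nat -> forall t, 0 <= t -> 0 <= x j t).
  { apply (infected_nonneg Hsol); [lra | exact Hbeta | | exact Hs | exact Ho].
    intros j Hj. apply Hinit, Hj. }
  apply (nonincreasing_of_right_cont (s i)
    (fun t => - s i t * infection n beta beta_min (o i t) i (fun j => x j t))).
  - apply (Hsol i Hi).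
  - intros t Ht. apply (solution_derive Hsol i t Hi Ht).
  - intros t Ht.
    assert (0 <= infection n beta beta_min (o i t) i (fun j => x j t)).
    { apply infection_nonneg; [lra | intros j Hj; now apply Hbeta | apply Ho; [exact Hi|lra] |].
      intros j Hj. apply Hx; [exact Hj | lra]. }
    pose proof (Hs i Hi t ltac:(lra)). nra.
Qed.
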